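(* Let $M\ge2$ and $\bar\sigma>0$. Observe $\mathbf y=\mathbf f+\boldsymbol\xi\in\mathbf R^n$, where $\xi_1,\dots,\xi_n$ are i.i.d., centered with variance $\sigma^2$, and satisfy, for all $\mathbf b\in\mathbf R^n$, all $n\times n$ real matrices $B$ and all $x>0$, \[\mathbb P\big(\boldsymbol\xi^T\mathbf b>\bar\sigma\|\mathbf b\|_2\sqrt{2x}\big)\le e^{-x},\qquad \mathbb P\big(\boldsymbol\xi^TB\boldsymbol\xi-\sigma^2\mathrm{Tr}B>2\sigma\bar\sigma\|B\|_F\sqrt x+2\bar\sigma^2\|B\|_{op}x\big)\le e^{-x}.\] For $j=1,\dots,M$ let $\hat{\boldsymbol\mu}_j=A_j\mathbf y+\mathbf b_j$ with deterministic $n\times n$ matrices with $\|A_j\|_{op}\le1$ and deterministic $\mathbf b_j\in\mathbf R^n$. Let $\hat{\boldsymbol\theta}_{\mathrm{pen}}\in\arg\min_{\boldsymbol\theta\in\Lambda^M}H_{\mathrm{pen}}(\boldsymbol\theta)$. Then for all $x>0$, with probability at least $1-2e^{-x}$, \[\|\hat{\boldsymbol\mu}_{\hat{\boldsymbol\theta}_{\mathrm{pen}}}-\mathbf f\|_2^2\le\min_{j=1,\dots,M}\|\hat{\boldsymbol\mu}_j-\mathbf f\|_2^2+46\bar\sigma^2(2\log M+x).\]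
   Context: $\|\cdot\|_F$ Frobenius norm, $\|\cdot\|_{op}$ operator norm. $\Lambda^M=\{\boldsymbol\theta\in\mathbf R^M:\sum_j\theta_j=1,\theta_j\ge0\}$. For $\boldsymbol\theta\in\Lambda^M$: $A_{\boldsymbol\theta}=\sum_j\theta_jA_j$, $\mathbf b_{\boldsymbol\theta}=\sum_j\theta_j\mathbf b_j$, $\hat{\boldsymbol\mu}_{\boldsymbol\theta}=A_{\boldsymbol\theta}\mathbf y+\mathbf b_{\boldsymbol\theta}$. $C_p(\boldsymbol\theta)=\|\hat{\boldsymbol\mu}_{\boldsymbol\theta}\|_2^2-2\mathbf y^T\hat{\boldsymbol\mu}_{\boldsymbol\theta}+2\sigma^2\mathrm{Tr}(A_{\boldsymbol\theta})$, $\mathrm{pen}(\boldsymbol\theta)=\sum_j\theta_j\|\hat{\boldsymbol\mu}_{\boldsymbol\theta}-\hat{\boldsymbol\mu}_j\|_2^2$, $H_{\mathrm{pen}}=C_p+\tfrac12\mathrm{pen}$. *)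

From HB Require Import structures.
From mathcomp Require Import all_boot all_order all_algebra.
From mathcomp Require Import all_classical all_reals all_analysis.
Set Implicit Arguments. Unset Strict Implicit. Unset Printing Implicit Defensive.
Import Order.TTheory GRing.Theory Num.Theory.
Import numFieldNormedType.Exports.
Local Open Scope classical_set_scope.
Local Open Scope ring_scope.

Section Defs.
Variable R : realType.

Definition sqnorm2 {n : nat} (v : 'cV[R]_n) : R := \sum_(i < n) v i 0 ^+ 2.
Definition norm2 {n : nat} (v : 'cV[R]_n) : R := Num.sqrt (sqnorm2 v).
Definition dotv {n : nat} (u v : 'cV[R]_n) : R := \sum_(i < n) u i 0 * v i 0.
Definition frobnorm {n : nat} (B : 'M[R]_n) : R :=
  Num.sqrt (\sum_(i < n) \sum_(j < n) B i j ^+ 2).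
Definition opnorm {n : nat} (B : 'M[R]_n) : R :=
  sup [set norm2 (B *m v) | v in [set v : 'cV[R]_n | norm2 v <= 1]].

Definition simplex (M : nat) : set ('I_M -> R) :=
  [set th | \sum_(j < M) th j = 1 /\ forall j, 0 <= th j].

Definition Ath {n M : nat} (A : 'I_M -> 'M[R]_n) (th : 'I_M -> R) : 'M[R]_n :=
  \sum_(j < M) th j *: A j.
Definition bth {n M : nat} (b : 'I_M -> 'cV[R]_n) (th : 'I_M -> R) : 'cV[R]_n :=
  \sum_(j < M) th j *: b j.
Definition muhat {n M : nat} (A : 'I_M -> 'M[R]_n) (b : 'I_M -> 'cV[R]_n)
  (y : 'cV[R]_n) (th : 'I_M -> R) : 'cV[R]_n := Ath A th *m y + bth b th.
Definition muhat_j {n M : nat} (A : 'I_M -> 'M[R]_n) (b : 'I_M -> 'cV[R]_n)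
  (y : 'cV[R]_n) (j : 'I_M) : 'cV[R]_n := A j *m y + b j.

Definition Cp {n M : nat} (sigma : R) (A : 'I_M -> 'M[R]_n) (b : 'I_M -> 'cV[R]_n)
  (y : 'cV[R]_n) (th : 'I_M -> R) : R :=
  sqnorm2 (muhat A b y th) - 2 * dotv y (muhat A b y th) + 2 * sigma ^+ 2 * \tr (Ath A th).
Definition pen {n M : nat} (A : 'I_M -> 'M[R]_n) (b : 'I_M -> 'cV[R]_n)
  (y : 'cV[R]_n) (th : 'I_M -> R) : R :=
  \sum_(j < M) th j * sqnorm2 (muhat A b y th - muhat_j A b y j).
Definition Hpen {n M : nat} (sigma : R) (A : 'I_M -> 'M[R]_n) (b : 'I_M -> 'cV[R]_n)
  (y : 'cV[R]_n) (th : 'I_M -> R) : R :=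
  Cp sigma A b y th + 2^-1 * pen A b y th.

End Defs.
Arguments simplex {R} M.

Section Prob.
Local Open Scope ereal_scope.
Context (R : realType) (d : measure_display) (T : measurableType d).

Definition colv {n : nat} (X : 'I_n -> T -> R) (w : T) : 'cV[R]_n :=
  \col_(i < n) X i w.

Definition mutually_independent (P : probability T R) {n : nat} (X : 'I_n -> T -> R) :=
  forall (S : {set 'I_n}) (B : 'I_n -> set R), (forall i, measurable (B i)) ->
    P (\big[setI/setT]_(i in S) (X i @^-1` B i)) = \prod_(i in S) P (X i @^-1` B i).

Definition identically_distributed (P : probability T R) {n : nat} (X : 'I_n -> T -> R) :=
  forall i j (B : set R), measurable B -> P (X i @^-1` B) = P (X j @^-1` B).
End Prob.

(* On the simplex, [H_pen th] is [||mu_th||^2 / 2] plus a function linear in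
   [th], so comparing the minimiser with the points of the segments towards the
   vertices gives the quadratic growth
   [H_pen th_hat + ||mu_j - mu_th_hat||^2 / 2 <= H_pen e_j] for every [j].
   Rearranged, this reduces the oracle inequality to a bound, for every pair
   [(k, j)], on the excess
   [2 xi^T (mu_k - mu_j) - 2 sigma^2 Tr (A_k - A_j) - ||mu_k - mu_j||^2 / 2].
   Writing [mu_k - mu_j = u + B xi] with [u] deterministic and [||B||_op <= 2],
   the excess is a linear form [xi^T (2 u - B^T u)] plus a centred quadratic
   form in [xi], minus [||u||^2 / 2 + sigma^2 ||B||_F^2 / 2]. The two
   concentration inequalities at level [x + 2 log M], combined with AM-GM,
   bound it by [46 sigmabar^2 (x + 2 log M)], and a union bound over the [M^2]
   pairs costs [2 e^-x]. *)

From HB Require Import structures.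
From mathcomp Require Import all_boot all_order all_algebra.
From mathcomp Require Import all_classical all_reals all_analysis.
From mathcomp Require Import measurable_realfun.
From mathcomp Require Import ring lra.
Set Implicit Arguments. Unset Strict Implicit. Unset Printing Implicit Defensive.
Import Order.TTheory GRing.Theory Num.Theory.
Import numFieldNormedType.Exports.
Local Open Scope classical_set_scope.
Local Open Scope ring_scope.

Section Euclidean.
Variables (R : realType) (n : nat).
Implicit Types (u v w : 'cV[R]_n) (B : 'M[R]_n).

Lemma dotvC u v : dotv u v = dotv v u.
Proof. by apply: eq_bigr => i _; rewrite mulrC. Qed.

Lemma dotvDr u v w : dotv u (v + w) = dotv u v + dotv u w.
Proof. by rewrite /dotv -big_split; apply: eq_bigr => i _; rewrite mxE mulrDr. Qed.

Lemma dotvDl u v w : dotv (v + w) u = dotv v u + dotv w u.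
Proof. by rewrite dotvC dotvDr !(dotvC u). Qed.

Lemma dotvZr u v (c : R) : dotv u (c *: v) = c * dotv u v.
Proof. by rewrite /dotv mulr_sumr; apply: eq_bigr => i _; rewrite mxE mulrCA. Qed.

Lemma dotvZl u v (c : R) : dotv (c *: v) u = c * dotv v u.
Proof. by rewrite dotvC dotvZr dotvC. Qed.

Lemma dotvBr u v w : dotv u (v - w) = dotv u v - dotv u w.
Proof. by rewrite dotvDr -scaleN1r dotvZr mulN1r. Qed.

Lemma dotvBl u v w : dotv (v - w) u = dotv v u - dotv w u.
Proof. by rewrite dotvC dotvBr !(dotvC u). Qed.

Lemma dotv0l v : dotv 0 v = 0.
Proof. by rewrite /dotv big1 // => i _; rewrite mxE mul0r. Qed.

Lemma dotv_sumr (I : finType) u (F : I -> 'cV[R]_n) :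
  dotv u (\sum_i F i) = \sum_i dotv u (F i).
Proof.
rewrite /dotv exchange_big /=; apply: eq_bigr => i _.
by rewrite summxE mulr_sumr.
Qed.

Lemma dotv_mulmxr u v B : dotv u (B *m v) = dotv (B^T *m u) v.
Proof.
rewrite /dotv.
under eq_bigr => i _ do rewrite mxE mulr_sumr.
under [RHS]eq_bigr => i _ do rewrite mxE mulr_suml.
rewrite exchange_big /=; apply: eq_bigr => i _; apply: eq_bigr => j _.
by rewrite mxE mulrCA mulrA.
Qed.

Lemma sqnorm2E v : sqnorm2 v = dotv v v.
Proof. by apply: eq_bigr => i _; rewrite expr2. Qed.

Lemma sqnorm2_ge0 v : 0 <= sqnorm2 v.
Proof. by apply: sumr_ge0 => i _; rewrite sqr_ge0. Qed.

Lemma sqnorm2_eq0 v : (sqnorm2 v == 0) = (v == 0).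
Proof.
apply/idP/eqP => [|->]; last by rewrite /sqnorm2 big1 // => i _; rewrite mxE expr0n.
rewrite psumr_eq0 => [/allP v0|i _]; last exact: sqr_ge0.
apply/matrixP => i j; rewrite ord1 mxE; apply/eqP; rewrite -sqrf_eq0.
by apply: v0; rewrite mem_index_enum.
Qed.

Lemma sqnorm2D u v : sqnorm2 (u + v) = sqnorm2 u + 2 * dotv u v + sqnorm2 v.
Proof. by rewrite !sqnorm2E !dotvDl !dotvDr (dotvC v u); ring. Qed.

Lemma sqnorm2B u v : sqnorm2 (u - v) = sqnorm2 u - 2 * dotv u v + sqnorm2 v.
Proof. by rewrite !sqnorm2E !dotvBl !dotvBr (dotvC v u); ring. Qed.

Lemma sqnorm2Z (c : R) v : sqnorm2 (c *: v) = c ^+ 2 * sqnorm2 v.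
Proof. by rewrite !sqnorm2E dotvZl dotvZr; ring. Qed.

Lemma norm2_ge0 v : 0 <= norm2 v.
Proof. exact: sqrtr_ge0. Qed.

Lemma sqr_norm2 v : norm2 v ^+ 2 = sqnorm2 v.
Proof. by rewrite sqr_sqrtr // sqnorm2_ge0. Qed.

Lemma norm2_eq0 v : (norm2 v == 0) = (v == 0).
Proof. by rewrite sqrtr_eq0 le_eqVlt ltNge sqnorm2_ge0 orbF sqnorm2_eq0. Qed.

Lemma norm20 : norm2 (0 : 'cV[R]_n) = 0.
Proof. by apply/eqP; rewrite norm2_eq0. Qed.

Lemma norm2Z (c : R) v : norm2 (c *: v) = `|c| * norm2 v.
Proof. by rewrite /norm2 sqnorm2Z sqrtrM ?sqr_ge0 // sqrtr_sqr. Qed.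

Lemma norm2_le_sqr v (c : R) : 0 <= c -> sqnorm2 v <= c ^+ 2 -> norm2 v <= c.
Proof. by move=> c0; rewrite -sqr_norm2 ler_pXn2r ?nnegrE ?norm2_ge0. Qed.

Lemma dotv_le_norm2 u v : dotv u v <= norm2 u * norm2 v.
Proof.
have [->|u0] := eqVneq u 0; first by rewrite dotv0l mulr_ge0 ?norm2_ge0.
have [->|v0] := eqVneq v 0; first by rewrite dotvC dotv0l mulr_ge0 ?norm2_ge0.
have uv0 : 0 < norm2 u * norm2 v.
  by rewrite mulr_gt0 // lt_def norm2_eq0 ?u0 ?v0 norm2_ge0.
have := sqnorm2_ge0 (norm2 v *: u - norm2 u *: v).
rewrite sqnorm2B !sqnorm2Z dotvZl dotvZr -!sqr_norm2; nra.
Qed.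

Lemma norm2D u v : norm2 (u + v) <= norm2 u + norm2 v.
Proof.
apply: norm2_le_sqr; first by rewrite addr_ge0 ?norm2_ge0.
by rewrite sqnorm2D -!sqr_norm2; have := dotv_le_norm2 u v; nra.
Qed.

Lemma norm2N v : norm2 (- v) = norm2 v.
Proof. by rewrite -scaleN1r norm2Z normrN1 mul1r. Qed.

Lemma norm2B u v : norm2 (u - v) <= norm2 u + norm2 v.
Proof. by rewrite -(norm2N v) norm2D. Qed.

Lemma norm2_sum (I : finType) (F : I -> 'cV[R]_n) :
  norm2 (\sum_i F i) <= \sum_i norm2 (F i).
Proof.
elim/big_rec2: _ => [|i x y _ ih]; first by rewrite norm20.
by apply: le_trans (norm2D _ _) _; rewrite lerD2l.
Qed.

End Euclidean.

Section MatrixNorms.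
Variables (R : realType) (n : nat).
Implicit Types (v : 'cV[R]_n) (B : 'M[R]_n).

Lemma mulmx_sum_col B v : B *m v = \sum_j v j 0 *: col j B.
Proof.
apply/matrixP => i k; rewrite ord1 !mxE summxE; apply: eq_bigr => j _.
by rewrite !mxE mulrC.
Qed.

Lemma abs_entry_le_norm2 v i : `|v i 0| <= norm2 v.
Proof.
rewrite -sqrtr_sqr ler_sqrt ?sqnorm2_ge0 // /sqnorm2 (bigD1 i) //= lerDl.
by apply: sumr_ge0 => j _; exact: sqr_ge0.
Qed.

Lemma opnorm_has_ubound B :
  has_ubound [set norm2 (B *m v) | v in [set v : 'cV[R]_n | norm2 v <= 1]].
Proof.
exists (\sum_j norm2 (col j B)) => _ [v /= v1 <-].
rewrite mulmx_sum_col; apply: le_trans (norm2_sum _) _; apply: ler_sum => j _.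
rewrite norm2Z ler_piMl ?norm2_ge0 //.
exact: le_trans (abs_entry_le_norm2 v j) v1.
Qed.

Lemma norm2_mulmx_le B v : norm2 (B *m v) <= opnorm B * norm2 v.
Proof.
have [->|v0] := eqVneq v 0; first by rewrite mulmx0 norm20 mulr0.
have vpos : 0 < norm2 v by rewrite lt_def norm2_eq0 v0 norm2_ge0.
have unit_v : norm2 ((norm2 v)^-1 *: v) <= 1.
  by rewrite norm2Z ger0_norm ?mulVf ?gt_eqF // invr_ge0 ltW.
have := ub_le_sup (opnorm_has_ubound B)
  (ex_intro2 _ _ ((norm2 v)^-1 *: v) unit_v erefl).
rewrite -scalemxAr norm2Z ger0_norm ?invr_ge0 ?(ltW vpos) // -/(opnorm B).
by rewrite ler_pdivrMl // mulrC.
Qed.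

Lemma opnorm_le B (c : R) : 0 <= c ->
  (forall v, norm2 (B *m v) <= c * norm2 v) -> opnorm B <= c.
Proof.
move=> c0 Bc; apply: ge_sup; first by exists (norm2 (B *m 0)), 0; rewrite //= norm20.
by move=> _ [v /= v1 <-]; apply: le_trans (Bc v) _; rewrite ler_piMr.
Qed.

Lemma norm2_mulmx_leW B (c : R) v : opnorm B <= c -> norm2 (B *m v) <= c * norm2 v.
Proof.
by move=> Bc; apply: le_trans (norm2_mulmx_le B v) _; rewrite ler_wpM2r ?norm2_ge0.
Qed.

(* [||B^T w||^2 = <w, B B^T w> <= c ||w|| ||B^T w||] *)
Lemma opnorm_trmx_le B (c : R) : 0 <= c -> opnorm B <= c -> opnorm B^T <= c.
Proof.
move=> c0 Bc; apply: opnorm_le => // w; set s := norm2 (B^T *m w).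
have sE : s ^+ 2 = dotv w (B *m (B^T *m w)).
  by rewrite /s sqr_norm2 sqnorm2E [RHS]dotv_mulmxr.
have := dotv_le_norm2 w (B *m (B^T *m w)); rewrite -sE => s2.
have := norm2_mulmx_leW (B^T *m w) Bc; rewrite -/s => Bs.
have s0 : 0 <= s := norm2_ge0 _.
have w0 := norm2_ge0 w.
have := mulr_ge0 c0 w0; have := ler_wpM2l w0 Bs; nra.
Qed.

Lemma frobnorm_ge0 B : 0 <= frobnorm B.
Proof. exact: sqrtr_ge0. Qed.

Lemma sqr_frobnorm B : frobnorm B ^+ 2 = \sum_j sqnorm2 (col j B).
Proof.
rewrite sqr_sqrtr; last by do 2!apply: sumr_ge0 => ? _; exact: sqr_ge0.
by rewrite exchange_big; do 2!apply: eq_bigr => ? _; rewrite mxE.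
Qed.

Lemma mxtrace_trmx_mul B : \tr (B^T *m B) = frobnorm B ^+ 2.
Proof.
rewrite sqr_frobnorm; apply: eq_bigr => j _.
by rewrite mxE /sqnorm2; apply: eq_bigr => i _; rewrite !mxE expr2.
Qed.

End MatrixNorms.

Section PairExcess.
Variables (R : realType) (n : nat).
Implicit Types (u v xi : 'cV[R]_n) (B : 'M[R]_n).

Definition excess_lin B u : 'cV[R]_n := 2 *: u - B^T *m u.
Definition excess_factor B : 'M[R]_n := 2%:M - 2^-1 *: B^T.
Definition excess_quad B : 'M[R]_n := excess_factor B *m B.

Lemma excessE (sigma : R) B u xi :
  2 * dotv xi (u + B *m xi) - 2 * sigma ^+ 2 * \tr B - 2^-1 * sqnorm2 (u + B *m xi) =
  dotv xi (excess_lin B u)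
  + (dotv xi (excess_quad B *m xi) - sigma ^+ 2 * \tr (excess_quad B))
  - 2^-1 * sqnorm2 u - 2^-1 * sigma ^+ 2 * frobnorm B ^+ 2.
Proof.
have linE : dotv xi (excess_lin B u) = 2 * dotv xi u - dotv (B *m xi) u.
  by rewrite dotvBr dotvZr dotv_mulmxr trmxK.
have factorE v : excess_factor B *m v = 2 *: v - 2^-1 *: (B^T *m v).
  by rewrite /excess_factor mulmxBl mul_scalar_mx -scalemxAl.
have quadE :
    dotv xi (excess_quad B *m xi) = 2 * dotv xi (B *m xi) - 2^-1 * sqnorm2 (B *m xi).
  rewrite /excess_quad -mulmxA factorE dotvBr !dotvZr.
  by rewrite [dotv xi (B^T *m _)]dotv_mulmxr trmxK sqnorm2E.
have trE : \tr (excess_quad B) = 2 * \tr B - 2^-1 * frobnorm B ^+ 2.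
  rewrite /excess_quad /excess_factor mulmxBl mul_scalar_mx -scalemxAl.
  by rewrite -mxtrace_trmx_mul linearB !linearZ.
by rewrite linE quadE trE dotvDr sqnorm2D (dotvC u); field.
Qed.

Section Contraction2.
Variable B : 'M[R]_n.
Hypothesis B2 : opnorm B <= 2.

Let BT2 v : norm2 (B^T *m v) <= 2 * norm2 v.
Proof. exact/norm2_mulmx_leW/opnorm_trmx_le. Qed.

Lemma norm2_excess_lin u : norm2 (excess_lin B u) <= 4 * norm2 u.
Proof.
apply: le_trans (norm2B _ _) _.
by rewrite norm2Z ger0_norm //; have := BT2 u; lra.
Qed.

Lemma norm2_excess_factor v : norm2 (excess_factor B *m v) <= 3 * norm2 v.
Proof.
rewrite /excess_factor mulmxBl mul_scalar_mx -scalemxAl.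
apply: le_trans (norm2B _ _) _.
by rewrite !norm2Z !ger0_norm ?invr_ge0 //; have := BT2 v; lra.
Qed.

Lemma opnorm_excess_quad : opnorm (excess_quad B) <= 6.
Proof.
apply: opnorm_le => // v; rewrite -mulmxA.
apply: le_trans (norm2_excess_factor _) _.
by have := norm2_mulmx_leW v B2; lra.
Qed.

Lemma frobnorm_excess_quad : frobnorm (excess_quad B) <= 3 * frobnorm B.
Proof.
rewrite -(ler_pXn2r (_ : (0 < 2)%N)) ?nnegrE ?mulr_ge0 ?frobnorm_ge0 //.
rewrite exprMn !sqr_frobnorm mulr_sumr; apply: ler_sum => j _.
have -> : col j (excess_quad B) = excess_factor B *m col j B by exact/esym/mulmx_colsub.
rewrite -!sqr_norm2 -exprMn ler_pXn2r ?nnegrE ?mulr_ge0 ?norm2_ge0 //.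
exact: norm2_excess_factor.
Qed.

Lemma excess_le (sigma sb x : R) u xi :
  0 <= sigma -> 0 < sb -> 0 < x ->
  dotv xi (excess_lin B u) <= sb * norm2 (excess_lin B u) * Num.sqrt (2 * x) ->
  dotv xi (excess_quad B *m xi) - sigma ^+ 2 * \tr (excess_quad B) <=
    2 * sigma * sb * frobnorm (excess_quad B) * Num.sqrt x
    + 2 * sb ^+ 2 * opnorm (excess_quad B) * x ->
  2 * dotv xi (u + B *m xi) - 2 * sigma ^+ 2 * \tr B <=
    2^-1 * sqnorm2 (u + B *m xi) + 46 * sb ^+ 2 * x.
Proof.
move=> sigma0 sb0 x0 lin_dev quad_dev.
rewrite -lerBlDl excessE -(sqr_norm2 u).
set t := Num.sqrt x in quad_dev *; have t0 : 0 <= t := sqrtr_ge0 _.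
have tt : t ^+ 2 = x by rewrite sqr_sqrtr ?ltW.
set N := norm2 u; have N0 : 0 <= N := norm2_ge0 _.
set F := frobnorm B; have F0 : 0 <= F := frobnorm_ge0 _.
(* each deviation term is split by AM-GM, [2ab <= a^2 + b^2] *)
have lin_le :
    sb * norm2 (excess_lin B u) * Num.sqrt (2 * x) <= 2^-1 * N ^+ 2 + 16 * sb ^+ 2 * x.
  rewrite sqrtrM // -/t; set r := Num.sqrt 2.
  have r0 : 0 <= r := sqrtr_ge0 _; have rr : r ^+ 2 = 2 by rewrite sqr_sqrtr.
  have : sb * norm2 (excess_lin B u) * (r * t) <= sb * (4 * N) * (r * t).
    apply: ler_wpM2r; first exact: mulr_ge0.
    by apply: ler_wpM2l; [exact: ltW | exact: norm2_excess_lin].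
  rewrite -tt; have := sqr_ge0 (N - 4 * sb * r * t); nra.
have quad_le : 2 * sigma * sb * frobnorm (excess_quad B) * t
    <= 2^-1 * sigma ^+ 2 * F ^+ 2 + 18 * sb ^+ 2 * x.
  have : 2 * sigma * sb * frobnorm (excess_quad B) * t <= 2 * sigma * sb * (3 * F) * t.
    have ssb0 : 0 <= 2 * sigma * sb by rewrite !mulr_ge0 // ltW.
    by apply: ler_wpM2r => //; apply: ler_wpM2l => //; exact: frobnorm_excess_quad.
  rewrite -tt; have := sqr_ge0 (sigma * F - 6 * sb * t); nra.
have op_le : 2 * sb ^+ 2 * opnorm (excess_quad B) * x <= 12 * sb ^+ 2 * x.
  have := ler_wpM2l (mulr_ge0 (sqr_ge0 sb) (ltW x0)) opnorm_excess_quad; nra.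
lra.
Qed.

End Contraction2.
End PairExcess.

Lemma slope_ge0 (R : realFieldType) (a c : R) :
  (forall t, 0 < t <= 1 -> 0 <= t * a + t ^+ 2 * c) -> 0 <= a.
Proof.
move=> near0; rewrite leNgt; apply/negP => a_lt0.
pose t := Num.min 1 (- a / (`|c| + 1)).
have c1 : 0 < `|c| + 1 by rewrite ltr_wpDl.
have t0 : 0 < t by rewrite lt_min ltr01 divr_gt0 // oppr_gt0.
have t1 : t <= 1 by rewrite ge_min lexx.
have tc : t * `|c| < - a.
  have : t <= - a / (`|c| + 1) by rewrite ge_min lexx orbT.
  rewrite ler_pdivlMr // => ta.
  have := ler_norm c; have := normr_ge0 c; nra.
have := near0 t; rewrite t0 t1 => /(_ isT).
have := ler_norm c; have := ler_normr c; nra.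
Qed.

Section Mixture.
Variables (R : realType) (n M : nat).
Implicit Types (v : 'I_M -> 'cV[R]_n) (c : 'I_M -> R) (th : 'I_M -> R).

Definition mixture_objective v c th : R :=
  2^-1 * sqnorm2 (\sum_k th k *: v k) + \sum_k th k * c k.

Definition towards_vertex th (j : 'I_M) (t : R) : 'I_M -> R :=
  fun k => (1 - t) * th k + t * (k == j)%:R.

Lemma sum_towards_vertex (V : lmodType R) th j t (F : 'I_M -> V) :
  \sum_k towards_vertex th j t k *: F k = (1 - t) *: \sum_k th k *: F k + t *: F j.
Proof.
under eq_bigr do rewrite scalerDl -!scalerA.
rewrite big_split /= -!scaler_sumr; congr (_ + _ *: _).
rewrite (bigD1 j) //= eqxx scale1r big1 ?addr0 // => k kj.
by rewrite (negbTE kj) scale0r.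
Qed.

Lemma simplex_towards_vertex th j t :
  simplex M th -> 0 <= t <= 1 -> simplex M (towards_vertex th j t).
Proof.
move=> [th1 th0] /andP[t0 t1]; split.
  rewrite big_split /= -!mulr_sumr th1 (bigD1 j) //= eqxx big1 => [|k /negbTE -> //].
  by rewrite addr0 mulr1 mulr1 subrK.
by move=> k; rewrite addr_ge0 ?mulr_ge0 ?subr_ge0.
Qed.

Lemma mixture_objective_towards_vertex v c th j t :
  mixture_objective v c (towards_vertex th j t) =
  2^-1 * sqnorm2 ((1 - t) *: \sum_k th k *: v k + t *: v j)
  + ((1 - t) * \sum_k th k * c k + t * c j).
Proof.
rewrite /mixture_objective sum_towards_vertex; congr (_ + _).
exact: (sum_towards_vertex th j t (c : 'I_M -> R^o)).
Qed.

(* Along the segment from [th] to the vertex [j] the objective is a quadratic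
   in [t] with leading coefficient [||v j - sum_k th k v k||^2 / 2]; minimality
   at [t = 0] forces a nonnegative slope there. *)
Lemma mixture_objective_growth v c th j :
  simplex M th ->
  (forall th', simplex M th' -> mixture_objective v c th <= mixture_objective v c th') ->
  mixture_objective v c th + 2^-1 * sqnorm2 (v j - \sum_k th k *: v k)
    <= 2^-1 * sqnorm2 (v j) + c j.
Proof.
move=> thS thmin; rewrite /mixture_objective.
set m := \sum_k th k *: v k; set C := \sum_k th k * c k.
suff : 0 <= c j - C + dotv m (v j) - sqnorm2 m.
  by rewrite sqnorm2B (dotvC (v j)); lra.
apply: (@slope_ge0 _ _ (2^-1 * sqnorm2 (v j - m))) => t /andP[t0 t1].
have t01 : 0 <= t <= 1 by rewrite ltW.
have := thmin _ (simplex_towards_vertex j thS t01).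
rewrite mixture_objective_towards_vertex /mixture_objective -/m -/C -subr_ge0.
congr (0 <= _).
by rewrite sqnorm2B sqnorm2D !sqnorm2Z dotvZl dotvZr (dotvC (v j)); field.
Qed.

Lemma convex_sumB th (F : 'I_M -> R) (a : R) :
  \sum_k th k = 1 -> \sum_k th k * (F k - a) = \sum_k th k * F k - a.
Proof.
by move=> th1; rewrite (eq_bigr _ (fun k _ => mulrBr _ _ _)) sumrB -mulr_suml th1 mul1r.
Qed.

Lemma sum_dotv_mixture u v th : \sum_k th k * dotv u (v k) = dotv u (\sum_k th k *: v k).
Proof. by rewrite dotv_sumr; apply: eq_bigr => k _; rewrite dotvZr. Qed.

Definition oracle_cost v (f : 'cV[R]_n) (h : 'I_M -> R) k : R :=
  2^-1 * sqnorm2 (v k) - 2 * dotv f (v k) - h k.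

(* The pair condition makes [oracle_cost k - oracle_cost j] bounded below by an
   affine function of [v k], which survives averaging over [th]. *)
Lemma mixture_oracle v f h (K : R) th j :
  simplex M th ->
  (forall th', simplex M th' ->
     mixture_objective v (oracle_cost v f h) th
       <= mixture_objective v (oracle_cost v f h) th') ->
  (forall k, h k - h j <= 2^-1 * sqnorm2 (v k - v j) + K) ->
  sqnorm2 (\sum_k th k *: v k - f) <= sqnorm2 (v j - f) + K.
Proof.
move=> thS thmin hK; have [th1 th0] := thS.
have := mixture_objective_growth j thS thmin; rewrite /mixture_objective.
set m := \sum_k th k *: v k; set c := oracle_cost v f h; set w := v j - 2 *: f.
have cost_gap k : dotv w (v k) - (dotv w (v j) + K) <= c k - c j.
  have := hK k; rewrite /c /oracle_cost /w !dotvBl !dotvZl -sqnorm2E sqnorm2B.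
  by rewrite (dotvC (v j)); lra.
have avg_gap : dotv w m - (dotv w (v j) + K) <= \sum_k th k * c k - c j.
  rewrite -sum_dotv_mixture -!convex_sumB //.
  by apply: ler_sum => k _; exact: ler_wpM2l.
move: avg_gap; rewrite /w !sqnorm2B !dotvBl !dotvZl -sqnorm2E (dotvC m) (dotvC (v j) f).
lra.
Qed.

End Mixture.

Section Aggregation.
Variables (R : realType) (n M : nat).
Variables (sigma : R) (A : 'I_M -> 'M[R]_n) (b : 'I_M -> 'cV[R]_n).
Implicit Types (f xi y : 'cV[R]_n) (th : 'I_M -> R).

Lemma muhat_mixture y th : muhat A b y th = \sum_k th k *: muhat_j A b y k.
Proof.
rewrite /muhat /Ath /bth mulmx_suml -big_split; apply: eq_bigr => k _.
by rewrite /muhat_j scalerDr scalemxAl.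
Qed.

Lemma mxtrace_Ath th : \tr (Ath A th) = \sum_k th k * \tr (A k).
Proof. by rewrite /Ath raddf_sum; apply: eq_bigr => k _ /=; rewrite mxtraceZ. Qed.

Definition noise_gain xi y k : R :=
  2 * dotv xi (muhat_j A b y k) - 2 * sigma ^+ 2 * \tr (A k).

(* On the simplex, [pen th = sum_k th k ||mu_k||^2 - ||mu_th||^2], so [Hpen]
   is [||mu_th||^2 / 2] plus a linear function of [th]. *)
Lemma Hpen_mixtureE f xi th : \sum_k th k = 1 ->
  Hpen sigma A b (f + xi) th =
  mixture_objective (muhat_j A b (f + xi))
    (oracle_cost (muhat_j A b (f + xi)) f (noise_gain xi (f + xi))) th.
Proof.
move=> th1; set mu := muhat_j A b (f + xi).
rewrite /Hpen /Cp /pen /mixture_objective /oracle_cost /noise_gain -/mu muhat_mixture -/mu.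
set m := \sum_k th k *: mu k.
set S := \sum_k th k * sqnorm2 (mu k).
have penE : \sum_k th k * sqnorm2 (m - mu k) = S - sqnorm2 m.
  transitivity
    (\sum_k (th k * sqnorm2 m - 2 * (th k * dotv m (mu k)) + th k * sqnorm2 (mu k))).
    by apply: eq_bigr => k _; rewrite sqnorm2B; ring.
  rewrite big_split sumrB /= -mulr_suml th1 -mulr_sumr sum_dotv_mixture -/m -/S -sqnorm2E.
  ring.
have costE : \sum_k th k * (2^-1 * sqnorm2 (mu k) - 2 * dotv f (mu k)
                 - (2 * dotv xi (mu k) - 2 * sigma ^+ 2 * \tr (A k)))
    = 2^-1 * S - 2 * dotv (f + xi) m + 2 * sigma ^+ 2 * \tr (Ath A th).
  transitivity (\sum_k (2^-1 * (th k * sqnorm2 (mu k)) - 2 * (th k * dotv (f + xi) (mu k))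
                        + 2 * sigma ^+ 2 * (th k * \tr (A k)))).
    by apply: eq_bigr => k _; rewrite dotvDl; ring.
  rewrite big_split sumrB /= -!mulr_sumr sum_dotv_mixture -/m -/S.
  by rewrite mxtrace_Ath.
by rewrite penE costE; field.
Qed.

Definition pair_mx k j : 'M[R]_n := A k - A j.
Definition pair_vec f k j : 'cV[R]_n := pair_mx k j *m f + (b k - b j).

Lemma muhat_j_pairE f xi k j :
  muhat_j A b (f + xi) k - muhat_j A b (f + xi) j = pair_vec f k j + pair_mx k j *m xi.
Proof.
rewrite /muhat_j /pair_vec /pair_mx !mulmxBl !mulmxDr.
by apply/matrixP => ? ?; rewrite !mxE; ring.
Qed.

Lemma opnorm_pair_mx k j :
  opnorm (A k) <= 1 -> opnorm (A j) <= 1 -> opnorm (pair_mx k j) <= 2.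
Proof.
move=> Ak1 Aj1; apply: opnorm_le => // v; rewrite mulmxBl; apply: le_trans (norm2B _ _) _.
by have := norm2_mulmx_leW v Ak1; have := norm2_mulmx_leW v Aj1; lra.
Qed.

Lemma noise_gain_pair_le f xi (sb x : R) k j :
  0 <= sigma -> 0 < sb -> 0 < x -> opnorm (A k) <= 1 -> opnorm (A j) <= 1 ->
  let B := pair_mx k j in let u := pair_vec f k j in
  dotv xi (excess_lin B u) <= sb * norm2 (excess_lin B u) * Num.sqrt (2 * x) ->
  dotv xi (excess_quad B *m xi) - sigma ^+ 2 * \tr (excess_quad B) <=
    2 * sigma * sb * frobnorm (excess_quad B) * Num.sqrt x
    + 2 * sb ^+ 2 * opnorm (excess_quad B) * x ->
  noise_gain xi (f + xi) k - noise_gain xi (f + xi) j <=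
    2^-1 * sqnorm2 (muhat_j A b (f + xi) k - muhat_j A b (f + xi) j) + 46 * sb ^+ 2 * x.
Proof.
move=> sigma0 sb0 x0 Ak1 Aj1 B u.
have -> : noise_gain xi (f + xi) k - noise_gain xi (f + xi) j =
    2 * dotv xi (muhat_j A b (f + xi) k - muhat_j A b (f + xi) j) - 2 * sigma ^+ 2 * \tr B.
  by rewrite /noise_gain dotvBr /B /pair_mx raddfB /=; ring.
rewrite muhat_j_pairE; exact: excess_le (opnorm_pair_mx Ak1 Aj1) _ _ _ _ _ sigma0 sb0 x0.
Qed.

End Aggregation.

Lemma expRN_add_2ln (R : realType) (x : R) (M : nat) : (0 < M)%N ->
  (M * M)%:R * expR (- (x + 2 * ln M%:R)) = expR (- x).
Proof.
move=> M0; have M0' : 0 < M%:R :> R by rewrite ltr0n.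
rewrite opprD expRD -mulrN (expRM_natl 2) (expRN (ln _)) lnK ?posrE // natrM.
by field; rewrite gt_eqF.
Qed.

Lemma bigsetU_ge (T : Type) (I : finType) (F : I -> set T) i : F i `<=` \big[setU/set0]_j F j.
Proof. by move=> w Fw; rewrite (bigD1 i) //=; left. Qed.

Section Events.
Variables (d : measure_display) (T : measurableType d) (R : realType).

Lemma measurable_superlevel (g : T -> R) (c : R) :
  measurable_fun setT g -> measurable [set w | c < g w].
Proof.
move=> mg; have := mg measurableT _ (measurable_itv `]c, +oo[).
rewrite setTI; congr measurable.
by apply/seteqP; split => w /=; rewrite in_itv /= andbT.
Qed.

Lemma measurable_dotv_colv n (X : 'I_n -> T -> R) (v : 'cV[R]_n) :
  (forall i, measurable_fun setT (X i)) -> measurable_fun setT (fun w => dotv (colv X w) v).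
Proof.
move=> mX; apply: measurable_sum => i.
under eq_fun do rewrite mxE.
by apply: measurable_funM => //; exact: measurable_cst.
Qed.

Lemma measurable_quad_colv n (X : 'I_n -> T -> R) (B : 'M[R]_n) :
  (forall i, measurable_fun setT (X i)) ->
  measurable_fun setT (fun w => dotv (colv X w) (B *m colv X w)).
Proof.
move=> mX; apply: measurable_sum => i.
rewrite (_ : (fun w => _) = fun w => X i w * \sum_j B i j * X j w); last first.
  by apply/funext => w; rewrite !mxE; congr (_ * _); apply: eq_bigr => j _; rewrite mxE.
apply: measurable_funM => //; apply: measurable_sum => j.
by apply: measurable_funM => //; exact: measurable_cst.
Qed.

Lemma le_measure_bigsetU (I : finType) (mu : {measure set T -> \bar R}) (F : I -> set T) :
  (forall i, measurable (F i)) -> (mu (\big[setU/set0]_i F i) <= \sum_i mu (F i))%E.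
Proof.
move=> mF; suff [] : measurable (\big[setU/set0]_i F i) /\
                    (mu (\big[setU/set0]_i F i) <= \sum_i mu (F i))%E by [].
elim/big_rec2: _ => [|i U s _ [mU Us]]; first by rewrite measure0.
split; first exact: measurableU.
by apply: le_trans (measureU2 _ (mF i) mU) _; rewrite leeD2l.
Qed.

Lemma probability_setC_bigsetU_ge (P : probability T R) (I : finType)
    (F : I -> set T) (e : R) :
  (forall i, measurable (F i)) -> (forall i, (P (F i) <= e%:E)%E) ->
  ((1 - #|I|%:R * e)%:E <= P (~` \big[setU/set0]_i F i))%E.
Proof.
move=> mF PF; set U := \big[setU/set0]_i F i.
have PU : (P U <= (#|I|%:R * e)%:E)%E.
  apply: le_trans (le_measure_bigsetU _ mF) _.
  rewrite mulr_natl -sumr_const -sumEFin [leRHS](eq_bigl (fun=> true)) //.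
  by apply: lee_sum => i _; exact: PF.
have mU : measurable U by apply: bigsetU_measurable => i _; exact: mF.
have finU : P U \is a fin_num by rewrite fin_num_measure.
rewrite probability_setC // -(fineK finU) -EFinB lee_fin.
by move: PU; rewrite -(fineK finU) lee_fin; lra.
Qed.

End Events.

Unset Implicit Arguments.

Theorem theorem6p1 (R : realType) (d : measure_display) (T : measurableType d)
  (P : probability T R) (n M : nat) (sigma sigmabar : R)
  (xi : 'I_n -> {RV P >-> R}) (f : 'cV[R]_n)
  (A : 'I_M -> 'M[R]_n) (b : 'I_M -> 'cV[R]_n)
  (thetahat : T -> ('I_M -> R)) :
  (2 <= M)%N -> 0 < sigmabar -> 0 <= sigma ->
  (* xi_1, ..., xi_n i.i.d., centered, with variance sigma^2 *)
  mutually_independent P (fun i => xi i : T -> R) ->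
  identically_distributed P (fun i => xi i : T -> R) ->
  (forall i, P.-integrable setT (EFin \o xi i)) ->
  (forall i, ('E_P[xi i] = 0)%E) ->
  (forall i, ('V_P[xi i] = (sigma ^+ 2)%:E)%E) ->
  (* linear concentration *)
  (forall (v : 'cV[R]_n) (x : R), 0 < x ->
     (P [set w | (dotv (colv (fun i => xi i : T -> R) w) v > sigmabar * norm2 v * Num.sqrt (2 * x))%R]
       <= (expR (- x))%:E)%E) ->
  (* quadratic concentration *)
  (forall (B : 'M[R]_n) (x : R), 0 < x ->
     (P [set w | (dotv (colv (fun i => xi i : T -> R) w) (B *m colv (fun i => xi i : T -> R) w)
                  - sigma ^+ 2 * \tr B
                > 2 * sigma * sigmabar * frobnorm B * Num.sqrt x + 2 * sigmabar ^+ 2 * opnorm B * x)%R]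
       <= (expR (- x))%:E)%E) ->
  (forall j, opnorm (A j) <= 1) ->
  (* thetahat(omega) is a minimiser of H_pen over the simplex, with y = f + xi(omega) *)
  (forall w, simplex M (thetahat w) /\
     forall th, simplex M th ->
       Hpen sigma A b (f + colv (fun i => xi i : T -> R) w) (thetahat w)
         <= Hpen sigma A b (f + colv (fun i => xi i : T -> R) w) th) ->
  forall x : R, 0 < x ->
    exists E : set T, measurable E /\ ((1 - 2 * expR (- x))%:E <= P E)%E /\
      forall w, E w ->
        forall j : 'I_M,
          sqnorm2 (muhat A b (f + colv (fun i => xi i : T -> R) w) (thetahat w) - f)
            <= sqnorm2 (muhat_j A b (f + colv (fun i => xi i : T -> R) w) j - f)
               + 46 * sigmabar ^+ 2 * (2 * ln (M%:R : R) + x).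
Proof.
(* Independence and the moment assumptions are used only through the two
   concentration inequalities. *)
move=> M2 sb0 sigma0 _ _ _ _ _ lin_conc quad_conc A1 thmin x x0.
set X := colv (fun i => xi i : T -> R).
set x' := x + 2 * ln (M%:R : R).
have x'0 : 0 < x' by rewrite /x' ltr_wpDr // mulr_ge0 // ln_ge0 // ler1n ltnW.
pose B (p : 'I_M * 'I_M) := pair_mx A p.1 p.2.
pose u (p : 'I_M * 'I_M) := pair_vec A b f p.1 p.2.
pose lin_dev p :=
  [set w | sigmabar * norm2 (excess_lin (B p) (u p)) * Num.sqrt (2 * x')
           < dotv (X w) (excess_lin (B p) (u p))].
pose quad_dev p :=
  [set w | 2 * sigma * sigmabar * frobnorm (excess_quad (B p)) * Num.sqrt x'
           + 2 * sigmabar ^+ 2 * opnorm (excess_quad (B p)) * x'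
           < dotv (X w) (excess_quad (B p) *m X w) - sigma ^+ 2 * \tr (excess_quad (B p))].
have lin_meas p : measurable (lin_dev p).
  by apply: measurable_superlevel; exact: measurable_dotv_colv.
have quad_meas p : measurable (quad_dev p).
  apply: measurable_superlevel.
  by apply: measurable_funB; [exact: measurable_quad_colv | exact: measurable_cst].
exists (~` \big[setU/set0]_p (lin_dev p `|` quad_dev p)); split.
  by apply/measurableC/bigsetU_measurable => p _; exact: measurableU.
split.
  have -> : 2 * expR (- x) = #|{: 'I_M * 'I_M}|%:R * (expR (- x') + expR (- x')).
    by rewrite card_prod !card_ord -(expRN_add_2ln x (ltnW M2)); ring.
  apply: probability_setC_bigsetU_ge => p; first exact: measurableU.
  apply: le_trans (measureU2 _ (lin_meas p) (quad_meas p)) _.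
  by rewrite EFinD leeD ?lin_conc ?quad_conc.
move=> w good j; have [thS _] := thmin w.
rewrite muhat_mixture.
apply: (mixture_oracle (h := noise_gain sigma A b (X w) (f + X w))) => //.
  move=> th' th'S; rewrite -!Hpen_mixtureE; first exact: (thmin w).2.
  - by case: th'S.
  - by case: thS.
move=> k; rewrite (_ : 46 * _ * _ = 46 * sigmabar ^+ 2 * x'); last by rewrite /x' addrC.
have /not_orP[lin_ok quad_ok] : ~ (lin_dev (k, j) `|` quad_dev (k, j)) w.
  by move=> bad_w; apply: good; exact: (@bigsetU_ge _ _ _ (k, j)).
by apply: noise_gain_pair_le => //; rewrite leNgt; exact/negP.
Qed.
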